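(* For every $y_0\in Y$, $$\liminf_{T\to\infty}V_T(y_0)\ge d^*(y_0)\qquad\text{and}\qquad\liminf_{\alpha\uparrow1}h_\alpha(y_0)\ge d^*(y_0).$$
   Context: Let $Y\subset\mathbb{R}^m$ be nonempty compact, $U_0$ a compact metric space, $U(\cdot):Y\rightsquigarrow U_0$ upper semicontinuous and compact-valued, and $f:\mathbb{R}^m\times U_0\to\mathbb{R}^m$, $k:\mathbb{R}^m\times U_0\to\mathbb{R}$ continuous. Put $A(y):=\{u\in U(y): f(y,u)\in Y\}$ and $G:=\{(y,u): y\in Y,\ u\in A(y)\}$. Standing assumption: $A(y)\ne\emptyset$ for all $y\in Y$. For $y_0\in Y$, an admissible process on $\{0,\dots,T-1\}$ (respectively on $\{0,1,\dots\}$) is a pair $(y(t),u(t))$ with $y(0)=y_0$, $u(t)\in A(y(t))$ and $y(t+1)=f(y(t),u(t))$. The controls of such processes form $\mathcal U_T(y_0)$ (respectively $\mathcal U(y_0)$). Value functions: for $T\in\mathbb N$ and $\alpha\in(0,1)$, $$V_T(y_0):=\frac1T\min_{u\in\mathcal U_T(y_0)}\sum_{t=0}^{T-1}k(y(t),u(t)),\qquad h_\alpha(y_0):=(1-\alpha)\min_{u\in\mathcal U(y_0)}\sum_{t=0}^\infty\alpha^tk(y(t),u(t)).$$ Dual value: $d^*(y_0):=\sup\mu$, where the supremum is over triples $(\mu,\psi,\eta)\in\mathbb{R}\times C(Y)\times C(Y)$ such that for all $(y,u)\in G$: $$k(y,u)+\psi(y_0)-\psi(y)+\eta(f(y,u))-\eta(y)-\mu\ge0,\qquad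 \psi(f(y,u))-\psi(y)\ge0.$$ *)

From HB Require Import structures.
From mathcomp Require Import all_boot all_order all_algebra.
From mathcomp Require Import all_classical all_reals all_analysis.
Set Implicit Arguments. Unset Strict Implicit. Unset Printing Implicit Defensive.
Import Order.TTheory GRing.Theory Num.Theory.
Import numFieldNormedType.Exports.
Local Open Scope classical_set_scope.
Local Open Scope ring_scope.

Definition usc_on {X Z : topologicalType} (Y : set X) (U : X -> set Z) :=
  forall y, Y y -> forall O : set Z, open O -> U y `<=` O ->
    \forall y' \near y, Y y' -> U y' `<=` O.

Definition compact_valued_on {X Z : topologicalType} (Y : set X)
  (U : X -> set Z) := forall y, Y y -> compact (U y).

Section Control.
Context {R : realType} {m : nat} {U0 : Type}.
Variables (Y : set 'rV[R]_m) (U : 'rV[R]_m -> set U0)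
  (f : 'rV[R]_m -> U0 -> 'rV[R]_m) (k : 'rV[R]_m -> U0 -> R).

Definition Aset (y : 'rV[R]_m) : set U0 := [set u | U y u /\ Y (f y u)].
Definition Gset (y : 'rV[R]_m) (u : U0) : Prop := Y y /\ Aset y u.

Fixpoint traj (y0 : 'rV[R]_m) (u : nat -> U0) (t : nat) : 'rV[R]_m :=
  if t is t'.+1 then f (traj y0 u t') (u t') else y0.

Definition admissibleT (T : nat) (y0 : 'rV[R]_m) (u : nat -> U0) :=
  forall t, (t < T)%N -> Aset (traj y0 u t) (u t).
Definition admissible (y0 : 'rV[R]_m) (u : nat -> U0) :=
  forall t, Aset (traj y0 u t) (u t).

Local Open Scope ereal_scope.
(* V_T(y0) = (1/T) min_{u in U_T(y0)} sum_{t<T} k(y(t),u(t)) (min written as inf) *)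
Definition VT (T : nat) (y0 : 'rV[R]_m) : \bar R :=
  ereal_inf [set ((T%:R)^-1 * \sum_(t < T) k (traj y0 u t) (u t))%R%:E
            | u in admissibleT T y0].

Definition halpha (alpha : R) (y0 : 'rV[R]_m) : \bar R :=
  ereal_inf [set ((1 - alpha) *
       limn (fun n => \sum_(t < n) alpha ^+ t * k (traj y0 u t) (u t)))%R%:E
            | u in admissible y0].

Definition dstar (y0 : 'rV[R]_m) : \bar R :=
  ereal_sup [set mu%:E | mu in [set mu : R | exists psi eta : 'rV[R]_m -> R,
     [/\ {within Y, continuous psi}, {within Y, continuous eta} &
      forall y u, Gset y u ->
        (0 <= k y u + psi y0 - psi y + eta (f y u) - eta y - mu)%R /\
        (0 <= psi (f y u) - psi y)%R]]].
End Control.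

(* Weak duality.  For a dual-feasible triple (mu, psi, eta), the second
   constraint makes psi nondecreasing along admissible trajectories, so the
   first one gives k(y t, u t) >= mu + eta (y t) - eta (y (t+1)).  Summed with
   weights alpha^t (alpha = 1 for the Cesaro average), the eta-terms telescope
   to at most 2 sup_Y |eta|; hence V_T >= mu - 2 M / T and
   h_alpha >= mu - 2 M (1 - alpha), and the bounds pass to the lower limits. *)

From HB Require Import structures.
From mathcomp Require Import all_boot all_order all_algebra.
From mathcomp Require Import all_classical all_reals all_analysis.
From mathcomp Require Import lra.
Import Order.TTheory GRing.Theory Num.Theory.
Import numFieldNormedType.Exports.
Local Open Scope classical_set_scope.
Local Open Scope ring_scope.
Set Implicit Arguments. Unset Strict Implicit. Unset Printing Implicit Defensive.

Lemma discounted_telescope_ge (R : realDomainType) (a M : R) (e : nat -> R) n :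
  0 <= a <= 1 -> (forall t, (t <= n)%N -> `|e t| <= M) ->
  - (2 * M) <= \sum_(t < n) a ^+ t * (e t - e t.+1).
Proof.
move=> /andP[a0 a1] eM.
(* Abel summation: the sum equals
   [e 0 - a ^+ j * e j - (1 - a) * \sum_(t < j) a ^+ t * e t.+1]. *)
have partial j : (j <= n)%N ->
    e 0%N - a ^+ j * e j - (1 - a ^+ j) * M <= \sum_(t < j) a ^+ t * (e t - e t.+1).
  elim: j => [|j IH] jn; first by rewrite big_ord0 expr0; lra.
  rewrite big_ord_recr exprS /=.
  have aj0 : 0 <= a ^+ j by rewrite exprn_ge0.
  have /ler_normlP[_ ejM] := eM _ jn.
  have : 0 <= a ^+ j * (1 - a) * (M - e j.+1) by rewrite !mulr_ge0 // subr_ge0.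
  by move: (IH (ltnW jn)); nra.
have := partial _ (leqnn n).
have an0 : 0 <= a ^+ n by rewrite exprn_ge0.
have an1 : a ^+ n <= 1 by rewrite exprn_ile1.
have /ler_normlP[e0l e0r] := eM _ (leq0n n).
have /ler_normlP[enl enr] := eM _ (leqnn n).
have : 0 <= a ^+ n * (M + e n) by rewrite mulr_ge0 //; lra.
nra.
Qed.

Lemma discounted_sum_ge (R : realDomainType) (a mu M : R) (c e : nat -> R) n :
  0 <= a <= 1 -> (forall t, (t <= n)%N -> `|e t| <= M) ->
  (forall t, (t < n)%N -> mu <= c t + e t.+1 - e t) ->
  mu * \sum_(t < n) a ^+ t - 2 * M <= \sum_(t < n) a ^+ t * c t.
Proof.
move=> a01 eM step; have /andP[a0 _] := a01.
have := discounted_telescope_ge a01 eM.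
have : \sum_(t < n) a ^+ t * (e t - e t.+1) <=
       \sum_(t < n) a ^+ t * c t - mu * \sum_(t < n) a ^+ t.
  rewrite mulr_sumr -sumrB; apply: ler_sum => t _.
  rewrite [mu * _]mulrC -mulrBr ler_wpM2l ?exprn_ge0 //.
  by have := step _ (ltn_ord t); lra.
lra.
Qed.

Lemma is_cvg_discounted_sum (R : realType) (a K : R) (c : nat -> R) :
  `|a| < 1 -> (forall t, `|c t| <= K) ->
  cvgn (fun n => \sum_(t < n) a ^+ t * c t).
Proof.
move=> a1 cK.
have -> : (fun n => \sum_(t < n) a ^+ t * c t) = series (fun t => a ^+ t * c t).
  by apply/funext => n; rewrite /series /= big_mkord.
apply: normed_cvg; apply: (@series_le_cvg _ _ (geometric K `|a|)).
- by move=> n; exact: normr_ge0.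
- by move=> n; rewrite /geometric /= mulr_ge0 // (le_trans _ (cK 0%N)).
- move=> n; rewrite /geometric /= normrM normrX mulrC.
  by rewrite ler_wpM2r ?exprn_ge0.
- by apply: is_cvg_geometric_series; rewrite normr_id.
Qed.

Lemma continuous_compact_bounded (R : realType) (T : topologicalType)
    (A : set T) (g : T -> R) :
  compact A -> {within A, continuous g} ->
  exists M, forall x, A x -> `|g x| <= M.
Proof.
move=> cA cg; have [M [_ gM]] := compact_bounded (continuous_compact cg cA).
exists (`|M| + 1) => x Ax; apply: (gM (`|M| + 1)); last by exists x.
by rewrite (le_lt_trans (ler_norm M)) // ltrDl.
Qed.

Lemma le_limf_einf (R : realType) (T : choiceType) (X : filteredType T)
    (F : set_system X) (g : X -> \bar R) (mu : R) :
  (forall e, 0 < e -> \forall x \near F, ((mu - e)%:E <= g x)%E) ->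
  (mu%:E <= limf_einf g F)%E.
Proof.
move=> gF; apply/lee_subgt0Pr => e e0; rewrite limf_einfE.
apply: (le_trans _ (ereal_sup_ubound _)); last first.
  by exists [set x | ((mu - e)%:E <= g x)%E]; [exact: gF|].
by apply: le_ereal_inf_tmp => _ [x gx <-].
Qed.

Section DualFeasible.
Context {R : realType} {m : nat} {U0 : Type}.
Variables (Y : set 'rV[R]_m) (U : 'rV[R]_m -> set U0)
  (f : 'rV[R]_m -> U0 -> 'rV[R]_m) (k : 'rV[R]_m -> U0 -> R).
Variables (y0 : 'rV[R]_m) (mu M : R) (psi eta : 'rV[R]_m -> R).
Hypothesis Yy0 : Y y0.
Hypothesis feasible : forall y u, Gset Y U f y u ->
  (0 <= k y u + psi y0 - psi y + eta (f y u) - eta y - mu) /\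
  (0 <= psi (f y u) - psi y).
Hypothesis eta_bounded : forall y, Y y -> `|eta y| <= M.

Lemma admissible_traj_psi_ge T u : admissibleT Y U f T y0 u ->
  forall t, (t <= T)%N -> Y (traj f y0 u t) /\ psi y0 <= psi (traj f y0 u t).
Proof.
move=> adm; elim=> [|t IH] tT //=.
have [Yt psit] := IH (ltnW tT); have At := adm _ tT.
have [_ psi_step] := feasible (conj Yt At).
by split; [case: At|lra].
Qed.

Lemma feasible_step T u t : admissibleT Y U f T y0 u -> (t < T)%N ->
  mu <= k (traj f y0 u t) (u t) + eta (traj f y0 u t.+1) - eta (traj f y0 u t).
Proof.
move=> adm tT; have [Yt psit] := admissible_traj_psi_ge adm (ltnW tT).
have [cost_step _] := feasible (conj Yt (adm _ tT)).
rewrite /=; lra.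
Qed.

Lemma admissible_discounted_cost_ge a T u : 0 <= a <= 1 ->
  admissibleT Y U f T y0 u ->
  mu * \sum_(t < T) a ^+ t - 2 * M <=
  \sum_(t < T) a ^+ t * k (traj f y0 u t) (u t).
Proof.
move=> a01 adm.
apply: (discounted_sum_ge (c := fun t => k (traj f y0 u t) (u t))
  (e := fun t => eta (traj f y0 u t))) => // t tT.
  by apply: eta_bounded; case: (admissible_traj_psi_ge adm tT).
exact: feasible_step adm tT.
Qed.

Lemma VT_ge T : (0 < T)%N -> ((mu - 2 * M / T%:R)%:E <= VT Y U f k T y0)%E.
Proof.
move=> T0; apply: le_ereal_inf_tmp => _ [u adm <-]; rewrite lee_fin.
have unit_discount : 0 <= (1 : R) <= 1 by rewrite ler01 lexx.
have := admissible_discounted_cost_ge unit_discount adm.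
under [X in _ * X - _ <= _]eq_bigr do rewrite expr1n.
under [X in _ <= X]eq_bigr do rewrite expr1n mul1r.
rewrite sumr_const card_ord => cost_ge.
have T_gt0 : 0 < T%:R :> R by rewrite ltr0n.
rewrite ler_pdivlMl // mulrBr mulrCA divff ?gt_eqF // mulr1 mulrC.
exact: cost_ge.
Qed.

Lemma limn_einf_VT_ge : (mu%:E <= limn_einf (fun T => VT Y U f k T y0))%E.
Proof.
change (mu%:E <= limf_einf (fun T => VT Y U f k T y0) \oo)%E.
apply: le_limf_einf => e e0; near=> T; apply: le_trans (VT_ge _); last first.
  by near: T; exact: nbhs_infty_gt.
rewrite lee_fin lerD2l lerN2 ler_pdivrMr; last by near: T; exact: nbhs_infty_gtr.
rewrite mulrC -ler_pdivrMl //; apply/ltW.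
by near: T; exact: nbhs_infty_gtr.
Unshelve. all: by end_near. Qed.

Variable K : R.
Hypothesis k_bounded : forall y u, Y y -> `|k y u| <= K.

Lemma halpha_ge a : 0 <= a < 1 ->
  ((mu - 2 * M * (1 - a))%:E <= halpha Y U f k a y0)%E.
Proof.
move=> /andP[a0 a1]; apply: le_ereal_inf_tmp => _ [u adm <-]; rewrite lee_fin.
have admT T : admissibleT Y U f T y0 u by move=> t _; exact: adm.
pose c t := k (traj f y0 u t) (u t).
pose S n := \sum_(t < n) a ^+ t * c t.
have S_cvg : cvgn S.
  apply: (is_cvg_discounted_sum (c := c) (K := K)); first by rewrite ger0_norm.
  move=> t; apply: k_bounded.
  by case: (admissible_traj_psi_ge (admT t) (leqnn t)).
have S_ge n : mu - 2 * M * (1 - a) <= (1 - a) * S n + mu * a ^+ n.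
  have a01 : 0 <= a <= 1 by rewrite a0 ltW.
  have cost_ge := admissible_discounted_cost_ge a01 (admT n).
  have geo : (1 - a) * \sum_(t < n) a ^+ t = 1 - a ^+ n.
    by rewrite -opprB mulNr -subrX1 opprB.
  have : 0 <= (1 - a) * (S n - (mu * \sum_(t < n) a ^+ t - 2 * M)).
    by rewrite mulr_ge0 ?subr_ge0 // ltW.
  rewrite /S /c; nra.
have a_lt1 : `|a| < 1 by rewrite ger0_norm.
have S_lim : (fun n => (1 - a) * S n + mu * a ^+ n) @ \oo --> (1 - a) * limn S.
  rewrite -[X in _ --> X]addr0 -(mulr0 mu).
  by apply: cvgD; [exact: cvgMl_tmp | exact: cvgMl_tmp (cvg_expr a_lt1)].
exact: cvgr_to_ge S_lim (nearW _ S_ge).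
Qed.

Lemma limf_einf_halpha_ge :
  (mu%:E <= limf_einf (fun a => halpha Y U f k a y0) (1 : R)^'-)%E.
Proof.
have gap_cvg0 : 2 * M * (1 - a) @[a --> 1^'-] --> 0.
  apply: cvg_at_left_filter; rewrite -(mulr0 (2 * M)) -(subrr 1).
  exact: cvgMl_tmp (cvgB (cvg_cst _) cvg_id).
apply: le_limf_einf => e e0; near=> a; apply: le_trans (halpha_ge _); last first.
  by apply/andP; split; near: a; [exact: nbhs_left_ge | exact: nbhs_left_lt].
by rewrite lee_fin lerD2l lerN2; near: a; exact: cvgr_le gap_cvg0 _ e0.
Unshelve. all: by end_near. Qed.
End DualFeasible.

Theorem proposition2p3 (R : realType) (m : nat) (Y : set 'rV[R]_m)
  (U0 : pseudoMetricType R) (U : 'rV[R]_m -> set U0)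
  (f : 'rV[R]_m -> U0 -> 'rV[R]_m) (k : 'rV[R]_m -> U0 -> R) :
  Y !=set0 -> compact Y ->
  hausdorff_space U0 -> compact [set: U0] ->
  usc_on Y U -> compact_valued_on Y U ->
  continuous (fun p : 'rV[R]_m * U0 => f p.1 p.2) ->
  continuous (fun p : 'rV[R]_m * U0 => k p.1 p.2) ->
  (forall y, Y y -> Aset Y U f y !=set0) ->
  forall y0, Y y0 ->
    (limn_einf (fun T => VT Y U f k T y0) >= dstar Y U f k y0)%E /\
    (limf_einf (fun alpha => halpha Y U f k alpha y0) (1 : R)^'- >= dstar Y U f k y0)%E.
Proof.
move=> _ cY _ cU0 _ _ _ ck _ y0 Yy0.
have [K k_bounded] : exists K, forall y u, Y y -> `|k y u| <= K.
  have [K kK] := continuous_compact_bounded (compact_setX cY cU0)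
    (continuous_subspaceT ck).
  by exists K => y u Yy; exact: (kK (y, u)).
split; apply: ge_ereal_sup => _ [mu [psi [eta [_ eta_cont feasible]]] <-];
  have [M eta_bounded] := continuous_compact_bounded cY eta_cont.
- exact: limn_einf_VT_ge Yy0 feasible eta_bounded.
- exact (limf_einf_halpha_ge Yy0 feasible eta_bounded k_bounded).
Qed.
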